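(* Let $0\le\ell\le r$. The prime ideals $[I_0,\dots,I_\ell]$ of $\Omega_{H_\ell}$ with $I_0=0$ are exactly the $\ell+1$ ideals $$0\subsetneq\mathcal L(0)\subsetneq\mathcal L^2(0)\subsetneq\cdots\subsetneq\mathcal L^\ell(0),$$ where, for $0\le k\le\ell$, $\mathcal L^k(0)$ is the ideal of $\Omega_{H_\ell}$ obtained by applying $\mathcal L$ $k$ times to the zero ideal $[0,\dots,0]$ of $\Omega_{H_{\ell-k}}$.
   Context: Fix a prime $p$ and an integer $r\ge0$. For $0\le k\le r$ let $R_k$ be the commutative ring which is free as a $\mathbb{Z}$-module with basis $X_{k,0},\dots,X_{k,k}$ and multiplication $X_{k,i}X_{k,j}=p^{k-\max(i,j)}X_{k,\min(i,j)}$; thus $X_{k,k}=1$, and an integer $n$ is identified with $nX_{k,k}$. For $0\le k\le\ell\le r$ define: the additive map $\mathrm{ind}^\ell_k:R_k\to R_\ell$, $X_{k,i}\mapsto X_{\ell,i}$; the ring homomorphism $\mathrm{res}^\ell_k:R_\ell\to R_k$, $\mathrm{res}^\ell_k(X_{\ell,i})=p^{\ell-k}X_{k,i}$ if $i\le k$ and $=p^{\ell-i}$ if $i\ge k$; and the multiplicative map $\mathrm{jnd}^\ell_k:R_k\to R_\ell$, $$\mathrm{jnd}^\ell_k\Big(\sum_{i=0}^k m_iX_{k,i}\Big)=m_kX_{\ell,\ell}+\sum_{k\le i<\ell}\frac{m_k^{p^{\ell-i}}-m_k^{p^{\ell-i-1}}}{p^{\ell-i}}X_{\ell,i}+\sum_{0\le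 i<k}\frac{(\sum_{s=i}^k m_sp^{k-s})^{p^{\ell-k}}-(\sum_{s=i+1}^k m_sp^{k-s})^{p^{\ell-k}}}{p^{\ell-i}}X_{\ell,i}$$ ($m_i\in\mathbb{Z}$). For $k=\ell$ these maps are the identity. These data form the Burnside Tambara functor on $\mathbb{Z}/p^r\mathbb{Z}$; keeping indices $\le n$ gives $\Omega_{H_n}$. An ideal of $\Omega_{H_n}$ is a sequence $[I_0,\dots,I_n]$ of ideals $I_k\subseteq R_k$ such that for every $1\le k\le n$: $\mathrm{ind}^k_{k-1}(I_{k-1})\subseteq I_k$, $\mathrm{res}^k_{k-1}(I_k)\subseteq I_{k-1}$, $\mathrm{jnd}^k_{k-1}(I_{k-1})\subseteq I_k$; inclusion is componentwise. It is proper if $I_0\ne R_0$. A proper ideal is prime if for all $0\le\ell'\le k\le n$, $a\in R_k$, $b\in R_{\ell'}$: whenever $(\mathrm{jnd}^m_i\mathrm{res}^k_i(a))\cdot(\mathrm{jnd}^m_j\mathrm{res}^{\ell'}_j(b))\in I_m$ for all $0\le i\le k$, $0\le j\le\ell'$, $m=\max(i,j)$, then $a\in I_k$ or $b\in I_{\ell'}$. For an ideal $I\subseteq R_{k-1}$, $L(I)=(\mathrm{res}^k_{k-1})^{-1}(I)\subseteq R_k$; for an ideal $\mathscr I=[I_0,\dots,I_{k-1}]$ of $\Omega_{H_{k-1}}$, $\mathcal L\mathscr I=[I_0,\dots,I_{k-1},L(I_{k-1})]$. *)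

(* Burnside Tambara functor on Z/p^r. *)
From HB Require Import structures.
From mathcomp Require Import all_boot all_order all_algebra.
Unset Printing Implicit Defensive.
Import Order.TTheory GRing.Theory Num.Theory.
Local Open Scope ring_scope.

(* R_k : coefficient vectors (m_0,...,m_k) w.r.t. the basis X_{k,0},...,X_{k,k}. *)
Definition R (k : nat) := {ffun 'I_k.+1 -> int}.

(* coefficient of X_{k,t} (0 if t > k) *)
Definition cf k (a : R k) (t : nat) : int := if (t <= k)%N then a (inord t) else 0.

Definition mk k (f : nat -> int) : R k := [ffun i : 'I_k.+1 => f (nat_of_ord i)].

Definition pw (p e : nat) : int := ((p ^ e)%N)%:Z.

Definition zeroR (k : nat) : R k := mk k (fun _ => 0).
Definition addR k (a b : R k) : R k := mk k (fun t => cf k a t + cf k b t).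
Definition oppR k (a : R k) : R k := mk k (fun t => - cf k a t).
(* X_{k,i} X_{k,j} = p^(k - max i j) X_{k, min i j} *)
Definition mulR (p k : nat) (a b : R k) : R k :=
  mk k (fun t => \sum_(i < k.+1) \sum_(j < k.+1)
          (if minn i j == t then a i * b j * pw p (k - maxn i j) else 0)).

Definition ind (k l : nat) (a : R k) : R l := mk l (fun t => cf k a t).

Definition res (p l k : nat) (a : R l) : R k :=
  mk k (fun t => if (t < k)%N then pw p (l - k) * cf l a t
                 else \sum_(k <= i < l.+1) cf l a i * pw p (l - i)).

(* jnd^l_k, with exact integer divisions *)
Definition jnd (p k l : nat) (a : R k) : R l :=
  let m := cf k a k in
  let S i := \sum_(i <= s < k.+1) cf k a s * pw p (k - s) in
  mk l (fun t =>
    if t == l then m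
    else if (k <= t)%N then
      ((m ^+ (p ^ (l - t))%N - m ^+ (p ^ (l - t - 1))%N) %/ pw p (l - t))%Z
    else
      ((S t ^+ (p ^ (l - k))%N - S t.+1 ^+ (p ^ (l - k))%N) %/ pw p (l - t))%Z).

(* A family of subsets I_t of R_t; only the indices t <= n are relevant for Omega_{H_n}. *)
Definition ideal_family := forall t : nat, R t -> Prop.

Definition is_idealR (p k : nat) (I : R k -> Prop) : Prop :=
  [/\ I (zeroR k),
      (forall x y, I x -> I y -> I (addR k x y)),
      (forall x, I x -> I (oppR k x)) &
      (forall a x, I x -> I (mulR p k a x))].

Definition is_ideal (p n : nat) (I : ideal_family) : Prop :=
  (forall k, (k <= n)%N -> is_idealR p k (I k)) /\
  (forall k, (1 <= k)%N -> (k <= n)%N ->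
     [/\ (forall x, I k.-1 x -> I k (ind k.-1 k x)),
         (forall x, I k x -> I k.-1 (res p k k.-1 x)) &
         (forall x, I k.-1 x -> I k (jnd p k.-1 k x))]).

Definition is_prime_ideal (p n : nat) (I : ideal_family) : Prop :=
  [/\ is_ideal p n I,
      ~ (forall x : R 0, I 0%N x) &
      (forall (k l' : nat), (l' <= k)%N -> (k <= n)%N ->
        forall (a : R k) (b : R l'),
          (forall i j, (i <= k)%N -> (j <= l')%N ->
             I (maxn i j) (mulR p (maxn i j) (jnd p i (maxn i j) (res p k i a))
                                  (jnd p j (maxn i j) (res p l' j b)))) ->
          I k a \/ I l' b)].

Definition eqfam (n : nat) (I J : ideal_family) : Prop :=
  forall t, (t <= n)%N -> forall x : R t, I t x <-> J t x.
Definition subfam (n : nat) (I J : ideal_family) : Prop :=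
  forall t, (t <= n)%N -> forall x : R t, I t x -> J t x.
Definition strict_subfam (n : nat) (I J : ideal_family) : Prop :=
  subfam n I J /\ ~ subfam n J I.

Definition zerofam : ideal_family := fun t (x : R t) => x = zeroR t.

Definition calL (p n : nat) (I : ideal_family) : ideal_family :=
  fun t => if (t <= n)%N then I t else (fun x : R t => I t.-1 (res p t t.-1 x)).

(* Lpow p m k = calL^k applied to the zero ideal of Omega_{H_m}; an ideal of Omega_{H_(m+k)} *)
Fixpoint Lpow (p m k : nat) : ideal_family :=
  match k with
  | 0 => zerofam
  | k'.+1 => calL p (m + k') (Lpow p m k')
  end.

From mathcomp Require Import all_boot all_order all_algebra finfield.
From mathcomp Require Import zify.
From Stdlib Require Import Classical.
Set Implicit Arguments.
Unset Strict Implicit.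
Unset Printing Implicit Defensive.
Import Order.TTheory GRing.Theory Num.Theory.
Local Open Scope ring_scope.

(* For a : R_k and s <= k the "mark" mark a s = sum_(s <= i <= k) a_i p^(k-i)
   (the number of H_s-fixed points of the H_k-set a) gives an injective ring
   morphism R_k -> Z^(k+1).  In terms of marks, res keeps the marks, ind
   multiplies them by p, and jnd^(k+1)_k raises the marks to the p-th power
   (exact divisions come from Fermat and the lifting lemma p^d | a-b ->
   p^(d+1) | a^p - b^p) and puts the top coefficient at the new index.
   For m : nat let ker_marks m be the family whose t-th component consists of
   the a : R_t whose marks at all s <= min(t, m) vanish.  Then
   (1) calL^k(0) coincides with ker_marks (l-k) on Omega_{H_l};
   (2) each ker_marks m is a prime ideal with zero 0-th component;
   (3) conversely, if I is prime with I_0 = 0, let m be the last index with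
       I_m = 0; then I_t is contained in ker_marks m by restriction, and the
       reverse inclusion follows by strong induction on t, using an element of
       I_t with non-zero top mark and primality against a constant of R_0;
   (4) ker_marks (n+1) is strictly contained in ker_marks n at index n+1.
   The theorem is the conjunction of (1)-(4). *)

Lemma fermat_int (p : nat) (M : int) : prime p -> (p%:Z %| M ^+ p - M)%Z.
Proof.
move=> pp; rewrite (dvdz_pcharf (pchar_Fp pp)) rmorphB /= rmorphXn /=.
have := @expf_card ('F_p)%type (M%:~R).
by rewrite card_Fp // => ->; rewrite subrr.
Qed.

Lemma lift_int (p d : nat) (a b : int) : prime p -> (0 < d)%N ->
  ((p ^ d)%:Z %| a - b)%Z -> ((p ^ d.+1)%:Z %| a ^+ p - b ^+ p)%Z.
Proof.
move=> pp d0 dvd_ab.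
have dvdp_ab : (p%:Z %| a - b)%Z.
  by apply: dvdz_trans dvd_ab; rewrite /dvdz /=; apply: dvdn_exp.
rewrite subrXX expnSr PoszM; apply: dvdz_mul => //.
set S := \sum_(_ < _) _.
have -> : S = (S - \sum_(i < p) b ^+ p.-1) + \sum_(i < p) b ^+ p.-1 by rewrite subrK.
apply: rpredD; last first.
  by rewrite sumr_const card_ord -mulr_natl; apply: dvdz_mulr; rewrite natz dvdzz.
rewrite /S -sumrB; apply: rpred_sum => i _.
have -> : b ^+ p.-1 = b ^+ (p.-1 - i) * b ^+ i.
  by rewrite -exprD subnK // -ltnS prednK ?prime_gt0.
by rewrite -mulrBl; apply: dvdz_mulr; rewrite subrXX; apply: dvdz_mulr.
Qed.

Lemma cf_mk k f t : (t <= k)%N -> cf k (mk k f) t = f t.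
Proof. by move=> tk; rewrite /cf tk /mk ffunE inordK. Qed.

Lemma cf_out k (a : R k) t : (k < t)%N -> cf k a t = 0.
Proof. by rewrite /cf ltnNge => /negbTE ->. Qed.

Lemma cf_ord k (a : R k) (i : 'I_k.+1) : cf k a i = a i.
Proof. by rewrite /cf -ltnS ltn_ord inord_val. Qed.

Lemma eq_R k (a b : R k) : (forall t, (t <= k)%N -> cf k a t = cf k b t) -> a = b.
Proof. by move=> h; apply/ffunP => i; rewrite -!cf_ord; apply: h; rewrite -ltnS. Qed.

Lemma pw0 p : pw p 0 = 1.
Proof. by rewrite /pw expn0. Qed.

Lemma pw_add p a b : pw p a * pw p b = pw p (a + b).
Proof. by rewrite /pw -PoszM expnD. Qed.

Lemma pw_neq0 p e : (0 < p)%N -> pw p e != 0.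
Proof. by move=> p0; rewrite /pw; have := expn_gt0 p e; rewrite p0; case: (p ^ e)%N. Qed.

(* The element c X_{k,k} = c of R_k. *)
Definition cst k (c : int) : R k := mk k (fun t => if t == k then c else 0).

Definition mark (p k : nat) (a : R k) (s : nat) : int :=
  \sum_(s <= i < k.+1) cf k a i * pw p (k - i).

Lemma markS p k (a : R k) s : (s <= k)%N ->
  mark p a s = cf k a s * pw p (k - s) + mark p a s.+1.
Proof. by move=> sk; rewrite /mark big_ltn // ltnS. Qed.

Lemma mark_out p k (a : R k) s : (k < s)%N -> mark p a s = 0.
Proof. by move=> ks; rewrite /mark big_geq. Qed.

Lemma mark_top p k (a : R k) : mark p a k = cf k a k.
Proof. by rewrite markS // mark_out // subnn pw0 mulr1 addr0. Qed.

(* The marks determine the element (the mark matrix is triangular). *)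
Lemma mark_inj p k (a b : R k) : (0 < p)%N ->
  (forall s, (s <= k)%N -> mark p a s = mark p b s) -> a = b.
Proof.
move=> p0 h; apply: eq_R => t tk.
have next : mark p a t.+1 = mark p b t.+1.
  by case: (ltnP t k) => [lt|ge]; [apply: h | rewrite !mark_out // ltnS].
have := h t tk; rewrite (markS p a tk) (markS p b tk) next => /addIr /eqP.
by rewrite (inj_eq (mulIf (pw_neq0 (k - t) p0))) => /eqP.
Qed.

Lemma mark_zero p k s : mark p (zeroR k) s = 0.
Proof.
rewrite /mark big1_seq // => i /andP[_]; rewrite mem_index_iota => /andP[_ ik].
by rewrite cf_mk // mul0r.
Qed.

Lemma zero_of_mark p t (x : R t) : (0 < p)%N ->
  (forall s, (s <= t)%N -> mark p x s = 0) -> x = zeroR t.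
Proof. by move=> p0 h; apply: (mark_inj p0) => s hs; rewrite h // mark_zero. Qed.

Lemma mark_add p k (a b : R k) s : mark p (addR k a b) s = mark p a s + mark p b s.
Proof.
rewrite /mark -big_split /=; apply: eq_big_nat => i /andP[_ ik].
by rewrite cf_mk // mulrDl.
Qed.

Lemma mark_opp p k (a : R k) s : mark p (oppR k a) s = - mark p a s.
Proof.
rewrite /mark -sumrN; apply: eq_big_nat => i /andP[_ ik].
by rewrite cf_mk // mulNr.
Qed.

Lemma mark_cst p k c s : (s <= k)%N -> mark p (cst k c) s = c.
Proof.
move=> sk; rewrite /mark big_nat_recr //= cf_mk // eqxx subnn pw0 mulr1.
rewrite big1_seq ?add0r // => u /andP[_]; rewrite mem_index_iota => /andP[_ uk].
by rewrite cf_mk ?(ltnW uk) // ifN ?mul0r // neq_ltn uk.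
Qed.

(* ... and multiplicative: X_{k,i} X_{k,j} has mark p^(2k-i-j) at s <= min i j. *)
Lemma mark_mul p k (a b : R k) s :
  mark p (mulR p k a b) s = mark p a s * mark p b s.
Proof.
have markE (c : R k) : mark p c s =
    \sum_(i < k.+1) (if (s <= i)%N then c i * pw p (k - i) else 0).
  rewrite /mark big_geq_mkord big_mkcond; apply: eq_bigr => i _ /=.
  by rewrite cf_ord.
rewrite !markE mulr_suml.
have -> : \sum_(u < k.+1) (if (s <= u)%N then mulR p k a b u * pw p (k - u) else 0)
  = \sum_(u < k.+1) \sum_(i < k.+1) \sum_(j < k.+1)
      (if (s <= u)%N then (if minn i j == u then a i * b j * pw p (k - maxn i j)
                           else 0) * pw p (k - u) else 0).
  apply: eq_bigr => u _; rewrite /mulR ffunE.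
  case: ifP => _; last by rewrite big1 // => i _; rewrite big1.
  by rewrite mulr_suml; apply: eq_bigr => i _; rewrite mulr_suml.
rewrite exchange_big /=; apply: eq_bigr => i _.
rewrite mulr_sumr exchange_big /=; apply: eq_bigr => j _.
have ijk : (minn i j <= k)%N by rewrite geq_min -ltnS ltn_ord.
rewrite (bigD1 (inord (minn i j))) //= big1; last first.
  move=> u ne_u; case: ifP => // _; case: eqP => [e|_]; last by rewrite mul0r.
  by move: ne_u; rewrite e -(inj_eq val_inj) /= inordK // ?eqxx // ltnS.
rewrite inordK ?ltnS // eqxx addr0 leq_min.
case: (leqP s i) => si; case: (leqP s j) => sj /=; rewrite ?mul0r ?mulr0 //.
rewrite -mulrA pw_add mulrACA pw_add; congr (_ * pw _ _).
by have := ltn_ord i; have := ltn_ord j; rewrite /minn /maxn; case: ifP => _; lia.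
Qed.

Lemma mark_res p l k (a : R l) s : (s <= k)%N -> (k <= l)%N ->
  mark p (res p l k a) s = mark p a s.
Proof.
move=> sk kl; rewrite /mark big_nat_recr //.
rewrite [in RHS](@big_cat_nat _ _ _ k) //; last exact: leqW.
rewrite cf_mk // ltnn subnn pw0 mulr1; congr (_ + _).
apply: eq_big_nat => u /andP[_ uk]; rewrite cf_mk ?(ltnW uk) // uk.
by rewrite mulrC mulrA pw_add mulrC; congr (_ * pw _ _); lia.
Qed.

Lemma res_top p l k (a : R l) : (k <= l)%N -> cf k (res p l k a) k = mark p a k.
Proof. by move=> kl; rewrite cf_mk // ltnn. Qed.

Lemma mark_ind p k (x : R k) s : (s <= k.+1)%N ->
  mark p (ind k k.+1 x) s = pw p 1 * mark p x s.
Proof.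
move=> sk; rewrite /mark big_nat_recr //= cf_mk // cf_out // mul0r addr0.
rewrite mulr_sumr; apply: eq_big_nat => u /andP[_ uk].
by rewrite cf_mk ?(ltnW uk) // mulrCA pw_add; congr (_ * pw _ _); lia.
Qed.

Lemma jnd_top p k l (a : R k) : cf l (jnd p k l a) l = cf k a k.
Proof. by rewrite cf_mk // eqxx. Qed.

Lemma res_id p k (a : R k) : res p k k a = a.
Proof.
apply: eq_R => t tk; rewrite cf_mk //; case: ltnP => kt.
  by rewrite subnn pw0 mul1r.
have -> : t = k by apply/eqP; rewrite eqn_leq tk kt.
by rewrite big_nat1 subnn pw0 mulr1.
Qed.

Lemma jnd_id p k (a : R k) : (0 < p)%N -> jnd p k k a = a.
Proof.
move=> p0; apply: eq_R => t tk; rewrite cf_mk //; case: eqP => [->//|ne].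
have tk' : (t < k)%N by rewrite ltn_neqAle tk andbT; apply/eqP.
rewrite leqNgt tk' subnn expn0 !expr1 -/(mark p a t) -/(mark p a t.+1).
rewrite (markS p a tk) addrK.
by rewrite mulzK // pw_neq0.
Qed.

(* The coefficients of jnd^(k+1)_k x below the top, multiplied back by their
   denominators: these are the exact divisions in the definition of jnd. *)
Lemma jnd_coef_low p k (x : R k) s : prime p -> (s < k)%N ->
  cf k.+1 (jnd p k k.+1 x) s * pw p (k.+1 - s) = mark p x s ^+ p - mark p x s.+1 ^+ p.
Proof.
move=> pp sk; rewrite cf_mk; last by apply: leqW; apply: ltnW.
rewrite ifN; last by rewrite neq_ltn ltnS (ltnW sk).
rewrite leqNgt sk /= subSnn expn1 -/(mark p x s) -/(mark p x s.+1).
rewrite divzK // subSn; last exact: ltnW.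
apply: lift_int => //; first by rewrite subn_gt0.
by rewrite (markS p x (ltnW sk)) addrK; apply: dvdz_mull; apply: dvdzz.
Qed.

Lemma jnd_coef_top p k (x : R k) : prime p ->
  cf k.+1 (jnd p k k.+1 x) k * pw p 1 = cf k x k ^+ p - cf k x k.
Proof.
move=> pp; rewrite cf_mk // ifN; last by rewrite neq_ltn ltnSn.
rewrite leqnn subSnn subnn expn1 expn0 expr1.
by rewrite divzK // /pw expn1; apply: fermat_int.
Qed.

Lemma mark_jnd p k (x : R k) s : prime p -> (s <= k)%N ->
  mark p (jnd p k k.+1 x) s = mark p x s ^+ p.
Proof.
move=> pp sk.
rewrite /mark big_nat_recr ?(leqW sk) // big_nat_recr //= subSnn subnn pw0 mulr1.
rewrite jnd_coef_top // jnd_top -(mark_top p x).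
rewrite (eq_big_nat _ _ (fun i (hi : (s <= i < k)%N) =>
  jnd_coef_low x pp (proj2 (andP hi)))) /=.
have tele : \sum_(s <= i < k) (mark p x i ^+ p - mark p x i.+1 ^+ p)
    = mark p x s ^+ p - mark p x k ^+ p.
  rewrite (telescope_sumr_eq (fun i => - mark p x i ^+ p)) ?opprK 1?addrC //.
  by move=> i _; rewrite opprK addrC.
by rewrite tele -/(mark p x s) -addrA !subrK.
Qed.

Lemma ind_of_top0 k (d : R k.+1) : cf k.+1 d k.+1 = 0 -> d = ind k k.+1 (mk k (cf k.+1 d)).
Proof.
move=> top0; apply: eq_R => u uk; rewrite [in RHS]cf_mk //.
case: (leqP u k) => uk'; first by rewrite cf_mk.
have -> : u = k.+1 by lia.
by rewrite top0 cf_out.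
Qed.

Definition ker_marks (p m : nat) : ideal_family :=
  fun t (x : R t) => forall s, (s <= t)%N -> (s <= m)%N -> mark p x s = 0.
Arguments ker_marks : clear implicits.

Lemma ker_marks_low p m t (x : R t) : (0 < p)%N -> (t <= m)%N ->
  ker_marks p m t x -> x = zeroR t.
Proof.
by move=> p0 tm hx; apply: (zero_of_mark p0) => s st; exact: (hx s st (leq_trans st tm)).
Qed.

Lemma ker_marks_at0 p m (x : R 0) : (0 < p)%N -> ker_marks p m 0%N x <-> x = zeroR 0.
Proof.
move=> p0; split; first exact: ker_marks_low.
by move=> -> s _ _; rewrite mark_zero.
Qed.

(* Induction is injective on the mark kernels, since it multiplies marks by p. *)
Lemma ker_marks_ind_inv p m k (y : R k) : (0 < p)%N ->
  ker_marks p m k.+1 (ind k k.+1 y) -> ker_marks p m k y.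
Proof.
move=> p0 hy s s1 s2; have /eqP := hy s (leqW s1) s2.
by rewrite mark_ind ?(leqW s1) // mulf_eq0 (negbTE (pw_neq0 _ p0)) => /eqP.
Qed.

Lemma Lpow_ker_marks p m k t (x : R t) : (0 < p)%N -> (t <= m + k)%N ->
  Lpow p m k t x <-> ker_marks p m t x.
Proof.
move=> p0; elim: k t x => [|k IH] t x tmk.
  split; first by move=> /= -> s _ _; rewrite mark_zero.
  by apply: ker_marks_low; rewrite // -(addn0 m).
rewrite /= /calL; case: ifP => [tmk'|]; first exact: IH.
move/negbT; rewrite -ltnNge => tmk'.
have et : t = (m + k).+1 by lia.
subst t; rewrite /= IH //; split => hx s s1 s2.
- have sk : (s <= m + k)%N by lia.
  by rewrite -(mark_res (k := m + k) p x) ?leqnSn //; exact: (hx s sk s2).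
- by rewrite mark_res ?leqnSn //; exact: (hx s (leqW s1) s2).
Qed.

Lemma ker_marks_ideal p m l : prime p -> is_ideal p l (ker_marks p m).
Proof.
move=> pp; split.
  move=> t _; split.
  - by move=> s _ _; rewrite mark_zero.
  - by move=> x y hx hy s s1 s2; rewrite mark_add hx ?hy ?addr0.
  - by move=> x hx s s1 s2; rewrite mark_opp hx ?oppr0.
  - by move=> a x hx s s1 s2; rewrite mark_mul hx ?mulr0.
move=> [//|k] _ _ /=; split.
- move=> x hx s s1 s2; rewrite mark_ind //.
  by case: (leqP s k) => sk; [rewrite hx ?mulr0 | rewrite mark_out ?mulr0].
- by move=> x hx s s1 s2; rewrite mark_res //; apply: hx => //; apply: leqW.
- move=> x hx s s1 s2; case: (leqP s k) => sk.
    by rewrite mark_jnd // hx // expr0n eqn0Ngt prime_gt0.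
  have -> : s = k.+1 by apply/eqP; rewrite eqn_leq s1 sk.
  rewrite mark_top jnd_top -(mark_top p).
  exact: (hx k (leqnn k) (ltnW (leq_trans sk s2))).
Qed.

Lemma ker_marks_nonzero_mark p m t (x : R t) : ~ ker_marks p m t x ->
  exists s, [/\ (s <= t)%N, (s <= m)%N & mark p x s != 0].
Proof.
move=> nx; apply: NNPP => hn; apply: nx => s s1 s2; apply: NNPP => hs.
by apply: hn; exists s; split => //; apply/eqP.
Qed.

(* A product of transfers is detected by the product of two non-zero marks,
   taken at the larger of the two indices. *)
Lemma ker_marks_prime p m l : prime p -> is_prime_ideal p l (ker_marks p m).
Proof.
move=> pp; have p0 := prime_gt0 pp; split; first exact: ker_marks_ideal.
  move=> h; have := ker_marks_low p0 (leq0n m) (h (cst 0 1)).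
  by move/(congr1 (fun z : R 0 => mark p z 0%N)); rewrite mark_cst // mark_zero => /eqP.
move=> k l' l'k kl a b prod_in.
case: (classic (ker_marks p m k a)) => [ha|na]; first by left.
case: (classic (ker_marks p m l' b)) => [hb|nb]; first by right.
have [s [s1 s2 as0]] := ker_marks_nonzero_mark na.
have [s' [s1' s2' bs0]] := ker_marks_nonzero_mark nb.
have := prod_in s s' s1 s1' (maxn s s') (leqnn _); rewrite geq_max s2 s2' => /(_ isT).
rewrite mark_mul !mark_top !jnd_top !res_top //.
by move/eqP; rewrite mulf_eq0 (negbTE as0) (negbTE bs0).
Qed.

Lemma is_prime_ideal_eqfam p l (I I' : ideal_family) :
  eqfam l I I' -> is_prime_ideal p l I' -> is_prime_ideal p l I.
Proof.
move=> E [[Hid Hcl] Hproper Hprime]; split; first split.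
- move=> k kl; have [Z A O M] := Hid k kl.
  split; first by rewrite E.
  + by move=> x y; rewrite !E //; apply: A.
  + by move=> x; rewrite !E //; apply: O.
  + by move=> a x; rewrite !E //; apply: M.
- move=> k k1 kl; have [Hi Hr Hj] := Hcl k k1 kl; have k'l : (k.-1 <= l)%N by lia.
  by split=> x; rewrite !E //; [apply: Hi | apply: Hr | apply: Hj].
- by move=> h; apply: Hproper => x; rewrite -E.
- move=> k l' l'k kl a b prod_in; rewrite !E //; last exact: leq_trans kl.
  apply: Hprime => // i j ik jl'; rewrite -E ?geq_max; first exact: prod_in.
  by rewrite (leq_trans ik kl) (leq_trans jl' (leq_trans l'k kl)).
Qed.

Lemma last_index (P : nat -> Prop) n : P 0%N ->
  exists m, [/\ (m <= n)%N, P m & ((m < n)%N -> ~ P m.+1)].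
Proof.
move=> P0; elim: n => [|n [m [mn Pm Pnext]]]; first by exists 0%N.
move: mn; rewrite leq_eqVlt => /orP[/eqP em | mn].
  subst m; case: (classic (P n.+1)) => [Pn1 | nPn1].
    by exists n.+1; split; rewrite ?ltnn.
  by exists n; split; rewrite ?leqnSn.
by exists m; split; rewrite ?(leqW (ltnW mn)) // => _; apply: Pnext.
Qed.

Section PrimeIdealIsMarkKernel.

Variables (p l : nat) (I : ideal_family).
Arguments I : clear implicits.
Hypothesis pp : prime p.
Hypothesis I_prime : is_prime_ideal p l I.
Hypothesis I_at0 : forall x : R 0, I 0%N x <-> x = zeroR 0.

Let p0 : (0 < p)%N := prime_gt0 pp.

Lemma I_component t : (t <= l)%N -> is_idealR p t (I t).
Proof. by case: I_prime => [[Hid _] _ _]; apply: Hid. Qed.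

Lemma I_transfer k : (k < l)%N ->
  [/\ (forall x, I k x -> I k.+1 (ind k k.+1 x)),
      (forall x, I k.+1 x -> I k (res p k.+1 k x)) &
      (forall x, I k x -> I k.+1 (jnd p k k.+1 x))].
Proof. by case: I_prime => [[_ Hcl] _ _] kl; exact: (Hcl k.+1 isT kl). Qed.

Definition vanishes (t : nat) : Prop := forall x : R t, I t x -> x = zeroR t.

(* Vanishing propagates downwards since ind is injective. *)
Lemma vanishes_le t u : (t <= u)%N -> (u <= l)%N -> vanishes u -> vanishes t.
Proof.
elim: u => [|u IH] tu ul Zu; first by move: tu; rewrite leqn0 => /eqP ->.
move: tu; rewrite leq_eqVlt ltnS => /orP[/eqP -> // | tu].
have Zu' : vanishes u.
  move=> x Ix; have [Hind _ _] := I_transfer ul.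
  apply: (zero_of_mark p0) => s su.
  have /(congr1 (fun z => mark p z s)) := Zu _ (Hind _ Ix).
  rewrite mark_ind ?(leqW su) // mark_zero => /eqP.
  by rewrite mulf_eq0 (negbTE (pw_neq0 _ p0)) => /eqP.
exact: (IH tu (ltnW ul) Zu').
Qed.

Section Threshold.

Variable m : nat.
Hypotheses (ml : (m <= l)%N) (Zm : vanishes m) (Znext : (m < l)%N -> ~ vanishes m.+1).

(* I is contained in the mark kernel: below m it vanishes, above m restrict. *)
Lemma I_sub_ker_marks t : (t <= l)%N -> forall x : R t, I t x -> ker_marks p m t x.
Proof.
elim: t => [|t IH] tl x Ix.
  by rewrite (proj1 (I_at0 x) Ix) => s _ _; rewrite mark_zero.
case: (leqP t.+1 m) => tm.
  by rewrite (vanishes_le tm ml Zm Ix) => s _ _; rewrite mark_zero.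
have [_ Hres _] := I_transfer tl.
move=> s s1 s2; have st : (s <= t)%N by lia.
by rewrite -(mark_res (k := t) p x) //; exact: (IH (ltnW tl) _ (Hres _ Ix) s st s2).
Qed.

Lemma ker_marks_sub_I_low t : (t <= m)%N -> forall x : R t, ker_marks p m t x -> I t x.
Proof.
move=> tm x hx; rewrite (ker_marks_low p0 tm hx).
by case: (I_component (leq_trans tm ml)).
Qed.

(* Above the threshold, I_t contains an element with non-zero top mark:
   start from a non-zero element of I_(m+1) and transfer it with jnd. *)
Lemma top_mark_witness t : (m < t)%N -> (t <= l)%N ->
  exists z : R t, I t z /\ mark p z t != 0.
Proof.
elim: t => [//|t IH] mt tl; case: (ltnP m t) => mt'.
  have [z [Iz z0]] := IH mt' (ltnW tl); have [_ _ Hjnd] := I_transfer tl.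
  by exists (jnd p t t.+1 z); split; [apply: Hjnd | rewrite mark_top jnd_top -(mark_top p)].
have et : t = m by lia.
subst t; have [z [Iz nz]] : exists z, I m.+1 z /\ z <> zeroR m.+1.
  apply: NNPP => hn; apply: (Znext tl) => z Iz; apply: NNPP => nz.
  by apply: hn; exists z.
exists z; split => //; apply/eqP => top0; apply: nz; apply: (zero_of_mark p0) => s sm.
case: (leqP s m) => sm'; first by apply: (I_sub_ker_marks tl Iz).
by have -> : s = m.+1 by lia.
Qed.

(* Modulo the inclusion one level below, membership in I_(k+1) of an element
   of the mark kernel only depends on its top mark: the difference of two
   such elements has top coefficient 0, hence is induced from index k. *)
Lemma I_of_same_top_mark k (v w : R k.+1) : (k < l)%N ->
  (forall y : R k, ker_marks p m k y -> I k y) ->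
  I k.+1 v -> ker_marks p m k.+1 w -> mark p w k.+1 = mark p v k.+1 -> I k.+1 w.
Proof.
move=> kl sub_k Iv Jw top_eq; have Jv := I_sub_ker_marks kl Iv.
have [_ Hadd _ _] := I_component kl; have [Hind _ _] := I_transfer kl.
pose d := addR k.+1 w (oppR k.+1 v).
have mark_d s : mark p d s = mark p w s - mark p v s by rewrite mark_add mark_opp.
have -> : w = addR k.+1 d v.
  by apply: (mark_inj p0) => s _; rewrite mark_add mark_d subrK.
have d_top : cf k.+1 d k.+1 = 0 by rewrite -(mark_top p) mark_d top_eq subrr.
have d_ind := ind_of_top0 d_top; rewrite d_ind.
apply: Hadd Iv; apply: Hind; apply: sub_k; apply: (ker_marks_ind_inv p0).
by rewrite -d_ind => s s1 s2; rewrite mark_d Jw ?Jv ?subrr.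
Qed.

(* Primality against the constant c of R_0: if c x lies in I_(k+1) for some
   c != 0, so does x, provided the inclusion holds below k+1. *)
Lemma I_of_scaled k (x : R k.+1) (c : int) : (k < l)%N -> c != 0 ->
  (forall i, (i <= k)%N -> forall y : R i, ker_marks p m i y -> I i y) ->
  ker_marks p m k.+1 x -> I k.+1 (mulR p k.+1 (cst k.+1 c) x) -> I k.+1 x.
Proof.
move=> kl c0 sub_below Jx Icx; case: I_prime => _ _ Hprime.
suff [//|/I_at0/(congr1 (fun z : R 0 => mark p z 0%N))] :
    I k.+1 x \/ I 0%N (cst 0 c).
  by rewrite mark_cst // mark_zero => c_eq0; rewrite c_eq0 eqxx in c0.
apply: Hprime => // i j ik; rewrite leqn0 => /eqP ->; rewrite maxn0 jnd_id // res_id.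
have Jw : ker_marks p m i (mulR p i (res p k.+1 i x) (jnd p 0 i (cst 0 c))).
  by move=> s s1 s2; rewrite mark_mul mark_res // Jx ?mul0r //; apply: leq_trans s1 ik.
move: ik; rewrite leq_eqVlt ltnS => /orP[/eqP ei | ik]; last exact: sub_below.
subst i; rewrite res_id in Jw *.
apply: (I_of_same_top_mark kl (sub_below k (leqnn k)) Icx Jw).
rewrite !mark_mul mark_cst // (mark_top p (jnd _ _ _ _)) jnd_top.
by rewrite -(mark_top p) mark_cst // mulrC.
Qed.

(* Inductive step above the threshold: scale x by the top mark c of an
   element z of I_(k+1); c x and (top mark of x) z agree in their top marks. *)
Lemma ker_marks_sub_I_step k : (m < k.+1)%N -> (k < l)%N ->
  (forall i, (i <= k)%N -> forall y : R i, ker_marks p m i y -> I i y) ->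
  forall x : R k.+1, ker_marks p m k.+1 x -> I k.+1 x.
Proof.
move=> mk kl sub_below x Jx; have [z [Iz z0]] := top_mark_witness mk kl.
apply: (I_of_scaled kl z0 sub_below Jx).
have [_ _ _ Hmul] := I_component kl.
apply: (I_of_same_top_mark kl (sub_below k (leqnn k)) (Hmul (cst k.+1 (mark p x k.+1)) _ Iz)).
  by move=> s s1 s2; rewrite mark_mul Jx ?mulr0.
by rewrite !mark_mul !mark_cst // mulrC.
Qed.

Lemma ker_marks_sub_I t : (t <= l)%N -> forall x : R t, ker_marks p m t x -> I t x.
Proof.
elim/ltn_ind: t => -[_ _|k IH kl]; first exact: ker_marks_sub_I_low.
case: (leqP k.+1 m) => mk; first exact: ker_marks_sub_I_low.
by apply: ker_marks_sub_I_step => // i ik; exact: (IH i ik (leq_trans ik (ltnW kl))).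
Qed.

End Threshold.

Lemma prime_ideal_eq_ker_marks :
  exists m, (m <= l)%N /\ eqfam l I (ker_marks p m).
Proof.
have [m [ml Zm Znext]] := last_index l (fun x (Ix : I 0%N x) => proj1 (I_at0 x) Ix).
exists m; split => // t tl x; split; first exact: I_sub_ker_marks.
exact: ker_marks_sub_I.
Qed.

End PrimeIdealIsMarkKernel.

(* (4) The chain is strict: p - ind(1) in R_(n+1) has marks p - p = 0 below
   n+1 and p at n+1. *)
Lemma ker_marks_antitone p m m' t (x : R t) : (m' <= m)%N ->
  ker_marks p m t x -> ker_marks p m' t x.
Proof. by move=> mm' hx s s1 s2; apply: hx s1 (leq_trans s2 mm'). Qed.

Lemma ker_marks_witness p n : (0 < p)%N ->
  exists x : R n.+1, ker_marks p n n.+1 x /\ ~ ker_marks p n.+1 n.+1 x.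
Proof.
move=> p0; exists (addR n.+1 (cst n.+1 (pw p 1)) (oppR n.+1 (ind n n.+1 (cst n 1)))).
split=> [s s1 s2 | hx].
  by rewrite mark_add mark_opp mark_cst // mark_ind // mark_cst // mulr1 subrr.
have /eqP := hx n.+1 (leqnn _) (leqnn _).
rewrite mark_add mark_opp mark_cst // mark_ind // mark_out // mulr0 subr0.
by rewrite (negbTE (pw_neq0 _ p0)).
Qed.

Lemma Lpow_strict p l k : prime p -> (k < l)%N ->
  strict_subfam l (Lpow p (l - k) k) (Lpow p (l - k.+1) k.+1).
Proof.
move=> pp kl; have p0 := prime_gt0 pp.
have [n en] : exists n, (l - k = n.+1)%N by exists (l - k).-1; rewrite prednK // subn_gt0.
have n_eq : (l - k.+1 = n)%N by lia.
rewrite n_eq en; have nkl : (n.+1 + k = l)%N by lia.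
split=> [t tl x | sub].
  have [t1 t2] : (t <= n.+1 + k)%N /\ (t <= n + k.+1)%N by lia.
  by rewrite !Lpow_ker_marks // => hx; exact: (ker_marks_antitone (leqnSn n) hx).
have [x [Jx nJx]] := ker_marks_witness n p0; apply: nJx.
have [nl nnk] : (n.+1 <= l)%N /\ (n.+1 <= n + k.+1)%N by lia.
rewrite -(Lpow_ker_marks (k := k)) ?leq_addr //; apply: sub => //.
by rewrite Lpow_ker_marks.
Qed.

Unset Implicit Arguments.

Theorem proposition6 (p r l : nat) : prime p -> (l <= r)%N ->
  (forall I : ideal_family,
     (is_prime_ideal p l I /\ (forall x : R 0, I 0%N x <-> x = zeroR 0))
     <-> exists k : nat, (k <= l)%N /\ eqfam l I (Lpow p (l - k) k))
  /\ (forall k : nat, (k < l)%N ->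
        strict_subfam l (Lpow p (l - k) k) (Lpow p (l - k.+1) k.+1)).
Proof.
move=> pp _; have p0 := prime_gt0 pp; split; last by move=> k; apply: Lpow_strict.
move=> I; split.
- case=> I_prime I_at0.
  have [m [ml E]] := prime_ideal_eq_ker_marks pp I_prime I_at0.
  exists (l - m)%N; rewrite subKn //; split; first exact: leq_subr.
  by move=> t tl x; rewrite E // Lpow_ker_marks // subnKC.
- case=> k [kl E].
  have E' : eqfam l I (ker_marks p (l - k)).
    by move=> t tl x; rewrite E // Lpow_ker_marks // subnK.
  split; first exact: is_prime_ideal_eqfam E' (ker_marks_prime _ _ pp).
  by move=> x; rewrite E' // ker_marks_at0.
Qed.
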